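(* For every finite graph $G$ with at least one vertex there exists an Eulerian subgraph $G'$ of $G$ such that $$\frac{|E(G')|}{|V(G')|}\ \ge\ \frac{|E(G)|+1}{|V(G)|}-1.$$
   Context: A graph is Eulerian if it is connected and every vertex has even degree (a single vertex with no edges counts as Eulerian). *)

From HB Require Import structures.
From mathcomp Require Import all_boot all_order all_algebra.
Set Implicit Arguments. Unset Strict Implicit. Unset Printing Implicit Defensive.

Definition simple_graph (T : finType) (e : rel T) : Prop :=
  symmetric e /\ irreflexive e.

Definition edges (T : finType) (e : rel T) : {set {set T}} :=
  [set [set p.1; p.2] | p in [set p : T * T | e p.1 p.2]].

Definition is_subgraph (T : finType) (e : rel T) (S : {set T}) (F : {set {set T}}) : Prop :=
  F \subset edges e /\ forall f, f \in F -> f \subset S.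

Definition deg (T : finType) (F : {set {set T}}) (v : T) : nat :=
  #|[set f in F | v \in f]|.

Definition adjF (T : finType) (F : {set {set T}}) : rel T :=
  fun x y => [set x; y] \in F.

(* The graph (S, F) is Eulerian: connected and all degrees even
   (a single vertex with no edges counts as Eulerian). *)
Definition eulerian (T : finType) (S : {set T}) (F : {set {set T}}) : Prop :=
  (forall x y, x \in S -> y \in S -> connect (adjF F) x y) /\
  (forall v, v \in S -> ~~ odd (deg F v)).

(* Identifying edge sets with vectors over GF(2), the map sending an edge set
   to its set of odd-degree vertices other than a fixed vertex v0 has at most
   2^(|V|-1) values, and the parity at v0 is then forced by the handshake
   lemma.  Hence any |V| edges contain a nonempty even subgraph, so a maximal
   even edge set F misses at most |V| - 1 edges.  Splitting an even graph along
   a connected component yields two even graphs, and by the mediant inequality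
   one of them is at least as dense as the whole; iterating, we reach a
   connected even subgraph of density at least |F|/|V| >= (|E|+1)/|V| - 1. *)

From HB Require Import structures.
From mathcomp Require Import all_boot all_order all_algebra.
From mathcomp Require Import zify.
Import Order.TTheory GRing.Theory Num.Theory.

Set Implicit Arguments.
Unset Strict Implicit.
Unset Printing Implicit Defensive.

Section Degrees.

Variable T : finType.
Implicit Types (A B F : {set {set T}}) (v : T).

Lemma deg_sum F v : deg F v = \sum_(f in F) (v \in f).
Proof.
rewrite /deg -sum1_card [RHS]big_mkcond [LHS]big_mkcond /=; apply: eq_bigr => f _.
by rewrite !inE; case: (f \in F); case: (v \in f).
Qed.

Lemma sum_deg F : \sum_v deg F v = \sum_(f in F) #|f|.
Proof.
under eq_bigr => v _ do rewrite deg_sum.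
rewrite exchange_big /=; apply: eq_bigr => f _.
by rewrite -sum1_card [RHS]big_mkcond; apply: eq_bigr => v _; case: (v \in f).
Qed.

Lemma deg_setID F B v : deg (F :&: B) v + deg (F :\: B) v = deg F v.
Proof.
rewrite /deg -(cardsID B [set f in F | v \in f]).
by congr (_ + _); apply: eq_card => f; rewrite !inE;
  case: (f \in F); case: (f \in B); case: (v \in f).
Qed.

Lemma deg_setU A B v : [disjoint A & B] -> deg (A :|: B) v = deg A v + deg B v.
Proof.
rewrite disjoint_sym => /setDidPl dBA.
by rewrite -(deg_setID (A :|: B) A) setUK setDUl setDv set0U dBA.
Qed.

Lemma odd_deg_symD A B v :
  odd (deg ((A :\: B) :|: (B :\: A)) v) = odd (deg A v) (+) odd (deg B v).
Proof.
have dAB : [disjoint A :\: B & B :\: A].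
  by rewrite -setI_eq0; apply/eqP/setP => f; rewrite !inE; case: (f \in A); case: (f \in B).
rewrite deg_setU // -(deg_setID A B) -(deg_setID B A) setIC !oddD.
by rewrite addbACA addbb.
Qed.

End Degrees.

Definition even_edges (T : finType) (F : {set {set T}}) : bool :=
  [forall v, ~~ odd (deg F v)].

Lemma even_edges_symD (T : finType) (A B : {set {set T}}) :
  even_edges A -> even_edges B -> even_edges ((A :\: B) :|: (B :\: A)).
Proof.
move=> /forallP evA /forallP evB; apply/forallP => v.
by rewrite odd_deg_symD (negbTE (evA v)) (negbTE (evB v)).
Qed.

Section CycleSpace.

Variables (T : finType) (e : rel T).
Hypothesis e_irr : irreflexive e.
Implicit Types (A B C F G : {set {set T}}).

Lemma card_edge f : f \in edges e -> #|f| = 2.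
Proof.
case/imsetP => p; rewrite inE => ep ->; rewrite cards2.
by case: eqP => // p12; rewrite p12 e_irr in ep.
Qed.

Lemma dvdn2_sum_deg F : F \subset edges e -> 2 %| \sum_v deg F v.
Proof.
move=> /subsetP sFe; rewrite sum_deg.
by apply: dvdn_sum => f /sFe /card_edge ->.
Qed.

Lemma exists_even_subset G :
  0 < #|T| -> G \subset edges e -> #|T| <= #|G| ->
  exists C, [/\ C \subset G, C != set0 & even_edges C].
Proof.
move=> T_gt0 sGe leTG; have [v0 _] := card_gt0P T_gt0.
pose odd_set A := [set v | odd (deg A v) && (v != v0)].
have : ~~ dinjectiveb odd_set (powerset G).
  apply/negP => /dinjectiveP inj.
  have sub : odd_set @: powerset G \subset powerset (~: [set v0]).
    apply/subsetP => X /imsetP [A _ ->]; rewrite inE.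
    by apply/subsetP => v; rewrite !inE => /andP [].
  have := subset_leq_card sub; rewrite card_in_imset // !card_powerset cardsC1.
  have : 2 ^ #|T|.-1 < 2 ^ #|G| by rewrite ltn_exp2l //; lia.
  lia.
case/dinjectivePn => A; rewrite inE => sAG [B]; rewrite !inE => /andP [neBA sBG] eqAB.
set C := (A :\: B) :|: (B :\: A).
have sCG : C \subset G by rewrite subUset !(subset_trans (subsetDl _ _)).
exists C; split => //.
  rewrite setU_eq0 !setD_eq0; apply: contra neBA => /andP [sAB sBA].
  by rewrite eq_sym eqEsubset sAB.
have even_off_v0 v : v != v0 -> ~~ odd (deg C v).
  move=> nv; rewrite odd_deg_symD.
  by move/setP/(_ v): eqAB; rewrite !inE nv !andbT => ->; rewrite addbb.
apply/forallP => v; have [->|] := eqVneq v v0; last exact: even_off_v0.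
have rest_even : 2 %| \sum_(u | u != v0) deg C u.
  by apply: dvdn_sum => u nu; rewrite dvdn2 even_off_v0.
by have := dvdn2_sum_deg (subset_trans sCG sGe); rewrite (bigD1 v0) //= dvdn_addl // dvdn2.
Qed.

Lemma exists_large_even_edges :
  0 < #|T| -> exists F, [/\ F \subset edges e, even_edges F & #|edges e| < #|F| + #|T|].
Proof.
move=> T_gt0.
pose even_sub F := (F \subset edges e) && even_edges F.
have even0 : even_sub set0.
  by rewrite /even_sub sub0set /=; apply/forallP => v; rewrite deg_sum big_set0.
case: (arg_maxnP (fun F => #|F|) even0) => F /andP [sFe evF] maxF.
exists F; split => //; rewrite ltnNge; apply/negP => leEF.
have [C [sCE nC evC]] : exists C, [/\ C \subset edges e :\: F, C != set0 & even_edges C].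
  apply: exists_even_subset => //; first exact: subsetDl.
  by have := cardsID F (edges e); rewrite (setIidPr sFe); lia.
move: sCE; rewrite subsetD => /andP [sCe dCF].
have dFC : [disjoint F & C] by rewrite disjoint_sym.
have FC : F :|: C = (F :\: C) :|: (C :\: F).
  by rewrite (setDidPl dFC) (setDidPl dCF).
have /maxF : even_sub (F :|: C).
  rewrite /even_sub subUset sFe sCe FC.
  exact: even_edges_symD.
rewrite /geq cardsU (disjoint_setI0 dFC) cards0 subn0; rewrite -card_gt0 in nC; lia.
Qed.

End CycleSpace.

Lemma mediant_leq (k n a b c d : nat) :
  k * (a + b) <= (c + d) * n -> k * a <= c * n \/ k * b <= d * n.
Proof. rewrite mulnDr mulnDl; lia. Qed.

Section Components.

Variables (T : finType) (e : rel T).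
Implicit Types (S C : {set T}) (F : {set {set T}}).

Definition even_subgraph S F := is_subgraph e S F /\ even_edges F.

Definition edge_closed F C := forall f x, f \in F -> x \in f -> x \in C -> f \subset C.

Definition component S F x := [set z in S | connect (adjF F) x z].

Lemma connect_in_edge F f x y :
  f \in F -> f \in edges e -> x \in f -> y \in f -> connect (adjF F) x y.
Proof.
move=> fF /imsetP [p _ fp]; rewrite fp !inE.
have adj12 : adjF F p.1 p.2 by rewrite /adjF -fp.
have adj21 : adjF F p.2 p.1 by rewrite /adjF setUC -fp.
by case/orP=> /eqP -> /orP [] /eqP ->; rewrite ?connect0 ?connect1.
Qed.

Lemma component_edge_closed S F x : is_subgraph e S F -> edge_closed F (component S F x).
Proof.
move=> [sFe sfS] f z fF zf; rewrite inE => /andP [_ xz].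
apply/subsetP => w wf; rewrite inE (subsetP (sfS f fF)) //=.
exact: connect_trans xz (connect_in_edge fF (subsetP sFe f fF) zf wf).
Qed.

Section ClosedSplit.

Variables (S C : {set T}) (F : {set {set T}}).
Hypothesis closedC : edge_closed F C.

Let inside := [set f : {set T} | f \subset C].

Lemma deg_inside v : deg (F :&: inside) v = if v \in C then deg F v else 0.
Proof.
rewrite /deg; case: ifP => vC.
  apply: eq_card => f; rewrite !inE.
  apply/andP/andP => [[/andP [fF _] vf] | [fF vf]]; split => //.
  by rewrite fF (closedC fF vf vC).
apply/eqP; rewrite cards_eq0; apply/eqP/setP => f; rewrite !inE.
by apply/negP => /andP [/andP [_ /subsetP sfC] /sfC]; rewrite vC.
Qed.

Hypothesis evSF : even_subgraph S F.

Lemma even_subgraph_inside : even_subgraph C (F :&: inside).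
Proof.
case: evSF => -[sFe _] _; split; first split.
- exact: subset_trans (subsetIl _ _) sFe.
- by move=> f; rewrite !inE => /andP [].
by apply/forallP => v; rewrite deg_inside; case: ifP => // _; apply: (forallP evSF.2).
Qed.

Lemma even_subgraph_outside : even_subgraph (S :\: C) (F :\: inside).
Proof.
case: evSF => -[sFe sfS] /forallP evF; split; first split.
- exact: subset_trans (subsetDl _ _) sFe.
- move=> f; rewrite !inE => /andP [sfC fF]; apply/subsetP => w wf.
  rewrite inE (subsetP (sfS f fF)) // andbT; apply: contra sfC.
  exact: closedC fF wf.
apply/forallP => v; have := evF v; rewrite -(deg_setID F inside) oddD.
by have /forallP/(_ v)/negbTE -> := even_subgraph_inside.2.
Qed.

End ClosedSplit.

Lemma exists_connected_even_subgraph (k n : nat) S F :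
  S != set0 -> even_subgraph S F -> k * #|S| <= #|F| * n ->
  exists S' F', [/\ S' != set0, even_subgraph S' F', k * #|S'| <= #|F'| * n &
                    forall x y, x \in S' -> y \in S' -> connect (adjF F') x y].
Proof.
elim: {S}_.+1 {-2}S (ltnSn #|S|) F => // N IH S ltSN F nS evSF dense.
case: (pickP [pred xy : T * T | [&& xy.1 \in S, xy.2 \in S & ~~ connect (adjF F) xy.1 xy.2]])
  => [[x y] /and3P [xS yS nxy] | conn]; last first.
  exists S, F; split => // x y xS yS.
  by have := conn (x, y); rewrite /= xS yS => /negbFE.
set C := component S F x.
have sCS : C \subset S by apply/subsetP => z; rewrite inE => /andP [].
have closedC : edge_closed F C := component_edge_closed evSF.1.
have xC : x \in C by rewrite inE xS connect0.
have yD : y \in S :\: C by rewrite !inE yS andbT; apply: contra nxy => /andP [].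
have cardS : #|C| + #|S :\: C| = #|S| by rewrite -(cardsID C S) (setIidPr sCS).
have [C_gt0 D_gt0] : 0 < #|C| /\ 0 < #|S :\: C| by split; apply/card_gt0P; [exists x | exists y].
rewrite -cardS -(cardsID [set f : {set T} | f \subset C] F) in dense.
case: (mediant_leq dense) => [denseC | denseD].
  apply: (IH C _ _ _ (even_subgraph_inside closedC evSF)) => //; first lia.
  by apply/set0Pn; exists x.
apply: (IH (S :\: C) _ _ _ (even_subgraph_outside closedC evSF)) => //; first lia.
by apply/set0Pn; exists y.
Qed.

End Components.

Local Open Scope ring_scope.

Lemma ratio_lower_bound (R : numFieldType) (m k n s a : nat) :
  (0 < n)%N -> (0 < s)%N -> (m <= k + n)%N -> (k * s <= a * n)%N ->
  m%:R / n%:R - 1 <= a%:R / s%:R :> R.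
Proof.
rewrite -!(ltr0n R) => n_gt0 s_gt0; rewrite -!(ler_nat R) natrD !natrM => mkn ksan.
apply: (@le_trans _ _ (k%:R / n%:R)).
  by rewrite lerBlDr ler_pdivrMr // mulrDl mul1r divfK // lt0r_neq0.
by rewrite ler_pdivlMr // mulrAC ler_pdivrMr.
Qed.

Theorem lemma3p3 (T : finType) (e : rel T) :
  simple_graph e -> (0 < #|T|)%N ->
  exists (S : {set T}) (F : {set {set T}}),
    [/\ is_subgraph e S F, S != set0, eulerian S F &
        (#|F|%:R / #|S|%:R : rat) >= (#|edges e|.+1)%:R / #|T|%:R - 1].
Proof.
move=> [_ e_irr] T_gt0.
have [F [sFe evF ltEF]] := exists_large_even_edges e_irr T_gt0.
pose k := (#|edges e|.+1 - #|T|)%N.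
have evT : even_subgraph e [set: T] F by split; [split => // f _; apply: subsetT | ].
have denseT : (k * #|[set: T]| <= #|F| * #|T|)%N by rewrite cardsT leq_mul2r /k; lia.
have nT : [set: T] != set0 by rewrite -card_gt0 cardsT.
have [S [F' [nS [subSF' /forallP evF'] denseS connS]]] :=
  exists_connected_even_subgraph nT evT denseT.
have eulS : eulerian S F' by split => // v _; apply: evF'.
exists S, F'; split => //.
apply: ratio_lower_bound (denseS) => //; first by rewrite card_gt0.
by rewrite /k; lia.
Qed.
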